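(* Let $\mathcal{A}$ be a safe generalized timed automaton (GTA) without renamings, and let $\rho := (q_0,v_0) \xrightarrow{\delta_0,t_0} (q_1,v_1) \xrightarrow{\delta_1,t_1} \cdots$ be a non-Zeno run of $\mathcal{A}$. Then for every future clock $x$ of $\mathcal{A}$ and every index $i \ge 0$, if $v_i(x) \neq -\infty$, there exists $j \ge i$ such that $x$ is released in $t_j$.
   Context: Clocks and valuations: $X = X_F \uplus X_H$ is a finite set of clocks partitioned into future clocks $X_F$ and history clocks $X_H$; $0$ denotes an extra constant clock. Write $\overline{\mathbb{R}} = \mathbb{R}\cup\{-\infty,+\infty\}$, with $(+\infty)+\alpha=\alpha+(+\infty)=+\infty$ for all $\alpha$, $(-\infty)+\beta=\beta+(-\infty)=-\infty$ for $\beta\neq+\infty$, $-(+\infty)=-\infty$, $-(-\infty)=+\infty$. A valuation is a map $v: X\cup\{0\}\to\overline{\mathbb{R}}$ with $v(0)=0$, $v(x)\in\mathbb{R}_{\ge0}\cup\{+\infty\}$ for $x\in X_H$ and $v(x)\in\mathbb{R}_{\le 0}\cup\{-\infty\}$ for $x\in X_F$. Constraints $\Phi(X)$ are finite conjunctions of atomic constraints $x-y\triangleleft c$ with $x,y\in X\cup\{0\}$, ${\triangleleft}\in\{<,\le\}$, $c\in\mathbb{Z}\cup\{-\infty,+\infty\}$; $v\models x-y\triangleleft c$ iff $v(x)-v(y)\triangleleft c$. For $\delta\ge 0$, $v+\delta$ adds $\delta$ to every clock of $X$. For $R\subseteq X$, $[R]v$ is the set of valuations $v'$ with $v'(x)=0$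 for $x\in R\cap X_H$ and $v'(x)=v(x)$ for $x\notin R$ (clocks in $R\cap X_F$ get arbitrary values; they are ''released''). A GTA without renamings is $\mathcal{A}=(Q,\Sigma,X,\Delta,\mathcal{I},Q_f)$: $Q$ finite set of states, $\Sigma$ finite alphabet, $\mathcal{I}$ a set of pairs $(q_0,g_0)$ with $q_0\in Q$, $g_0\in\Phi(X)$, $Q_f\subseteq Q$ Büchi states, and $\Delta$ a finite set of transitions $(q,a,\mathsf{prog},q')$ where $\mathsf{prog}=\mathsf{prog}_1;\dots;\mathsf{prog}_n$ with each $\mathsf{prog}_k$ either a guard $g\in\Phi(X)$ or a change $[R]$, $R\subseteq X$. Semantics of programs: $v\xrightarrow{g}v$ iff $v\models g$; $v\xrightarrow{[R]}v'$ iff $v'\in[R]v$; sequences compose. A future clock $x$ is released in transition $t$ if the program of $t$ contains some $[R]$ with $x\in R$. Configurations are pairs $(q,v)$; delay steps $(q,v)\xrightarrow{\delta}(q,v+\delta)$ are allowed when $v+\delta$ is a valuation (all future clocks $\le 0$); discrete steps $(q,v)\xrightarrow{t}(q',v')$ when $t=(q,a,\mathsf{prog},q')\in\Delta$ and $v\xrightarrow{\mathsf{prog}}v'$. A run is a sequence $(q_0,v_0)\xrightarrow{\delta_0,t_0}(q_1,v_1)\xrightarrow{\delta_1,t_1}\cdots$ (each step a delay $\delta_i$ followed by discrete transition $t_i$) starting from an initial configuration ($(q_0,g_0)\in\mathcal{I}$, $v_0\models g_0$). It is non-Zeno if $\sum_i\delta_i$ is unbounded. Safety: let $X_D\subseteq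 X_F$ be the set of future clocks occurring in some guard $x-y\triangleleft c$ of $\mathcal{A}$ with both $x,y\in X_F$. $\mathcal{A}$ is safe if in every transition program each clock of $X_D$ is checked by a guard of the program to be $0$ or $-\infty$ before it is released, and every initial guard $g_0$ forces each history clock to be $0$ or $+\infty$. *)

From Stdlib Require Import Reals List ZArith.
Import ListNotations.
Open Scope R_scope.
Set Implicit Arguments.

Inductive ER : Type := Fin (r : R) | PInf | NInf.

Definition eadd (a b : ER) : ER :=
  match a, b with
  | PInf, _ => PInf
  | _, PInf => PInf
  | NInf, _ => NInf
  | _, NInf => NInf
  | Fin x, Fin y => Fin (x + y)
  end.

Definition eopp (a : ER) : ER :=
  match a with Fin x => Fin (- x) | PInf => NInf | NInf => PInf end.

Definition ele (a b : ER) : Prop :=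
  match a, b with
  | NInf, _ => True
  | _, PInf => True
  | Fin x, Fin y => x <= y
  | _, _ => False
  end.
Definition elt (a b : ER) : Prop := ele a b /\ a <> b.

Inductive bnd : Type := BZ (z : Z) | BPInf | BNInf.
Definition bnd_ER (c : bnd) : ER :=
  match c with BZ z => Fin (IZR z) | BPInf => PInf | BNInf => NInf end.

Section Clocks.
Variable C : Type.
Variable fut : C -> bool.   (* fut x = true  iff x ∈ X_F ; otherwise x ∈ X_H *)

Definition valuation := C -> ER.

(** clock references: [None] is the constant clock 0 *)
Definition eval (v : valuation) (o : option C) : ER :=
  match o with None => Fin 0 | Some x => v x end.

Definition is_valuation (v : valuation) : Prop :=
  forall x, if fut x then (v x = NInf \/ exists r, v x = Fin r /\ r <= 0)
            else (v x = PInf \/ exists r, v x = Fin r /\ 0 <= r).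

(** atomic constraint  x - y ◁ c  (strict = true  means  < ) *)
Record atom := Atom { ax : option C; ay : option C; astrict : bool; abnd : bnd }.
Definition constraint := list atom.

Definition sat_atom (v : valuation) (a : atom) : Prop :=
  let d := eadd (eval v (ax a)) (eopp (eval v (ay a))) in
  if astrict a then elt d (bnd_ER (abnd a)) else ele d (bnd_ER (abnd a)).
Definition sat (v : valuation) (g : constraint) : Prop :=
  forall a, In a g -> sat_atom v a.

Definition shift (v : valuation) (d : R) : valuation :=
  fun x => eadd (v x) (Fin d).

Definition reset (Rs : list C) (v w : valuation) : Prop :=
  is_valuation w /\
  forall x, (In x Rs -> fut x = false -> w x = Fin 0) /\
            (~ In x Rs -> w x = v x).

Inductive instr : Type := Guard (g : constraint) | Change (Rs : list C).
Definition program := list instr.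

Fixpoint prog_sem (p : program) (v v' : valuation) : Prop :=
  match p with
  | [] => forall x, v' x = v x
  | Guard g :: p' => sat v g /\ prog_sem p' v v'
  | Change Rs :: p' => exists w, reset Rs v w /\ prog_sem p' w v'
  end.
End Clocks.

Record GTA (C Q Sig : Type) := MkGTA {
  fut : C -> bool;
  trans : list (Q * Sig * program C * Q);
  init : list (Q * constraint C);
  buchi : Q -> Prop
}.

Definition Finite (T : Type) : Prop := exists l : list T, forall x, In x l.

Definition t_src {C Q Sig} (t : Q * Sig * program C * Q) : Q :=
  let '(q, _, _, _) := t in q.
Definition t_prog {C Q Sig} (t : Q * Sig * program C * Q) : program C :=
  let '(_, _, p, _) := t in p.
Definition t_tgt {C Q Sig} (t : Q * Sig * program C * Q) : Q :=
  let '(_, _, _, q') := t in q'.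

Definition released {C Q Sig} (t : Q * Sig * program C * Q) (x : C) : Prop :=
  exists Rs, In (Change Rs) (t_prog t) /\ In x Rs.

Definition is_run {C Q Sig} (A : GTA C Q Sig) (q : nat -> Q) (v : nat -> valuation C)
    (d : nat -> R) (t : nat -> Q * Sig * program C * Q) : Prop :=
  (exists g0, In (q 0%nat, g0) (init A) /\ sat (v 0%nat) g0) /\
  (forall i, is_valuation (fut A) (v i)) /\
  (forall i, 0 <= d i /\ is_valuation (fut A) (shift (v i) (d i))) /\
  (forall i, In (t i) (trans A) /\ t_src (t i) = q i /\ t_tgt (t i) = q (S i) /\
             prog_sem (fut A) (t_prog (t i)) (shift (v i) (d i)) (v (S i))).

Fixpoint psum (d : nat -> R) (n : nat) : R :=
  match n with O => 0 | S n' => psum d n' + d n' end.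

Definition non_zeno (d : nat -> R) : Prop := forall M : R, exists n, M < psum d n.

Definition in_XD {C Q Sig} (A : GTA C Q Sig) (x : C) : Prop :=
  fut A x = true /\
  exists t g a y z, In t (trans A) /\ In (Guard g) (t_prog t) /\ In a g /\
    ax a = Some y /\ ay a = Some z /\ fut A y = true /\ fut A z = true /\
    (x = y \/ x = z).

Definition safe {C Q Sig} (A : GTA C Q Sig) : Prop :=
  (forall t k Rs x, In t (trans A) -> nth_error (t_prog t) k = Some (Change Rs) ->
     In x Rs -> in_XD A x ->
     exists k' g, (k' < k)%nat /\ nth_error (t_prog t) k' = Some (Guard g) /\
       forall w, is_valuation (fut A) w -> sat w g -> w x = Fin 0 \/ w x = NInf) /\
  (forall q0 g0, In (q0, g0) (init A) ->
     forall w, is_valuation (fut A) w -> sat w g0 ->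
     forall x, fut A x = false -> w x = Fin 0 \/ w x = PInf).

(* A future clock that is never released after step [i] is only advanced by
   the delays, so at step [k] its value is [v_i(x) + δ_i + ... + δ_(k-1)].
   Non-Zenoness makes this eventually positive, whereas finite values of a
   future clock are nonpositive. *)

From Stdlib Require Import Reals List Lra Lia Classical.

Lemma prog_sem_unreleased {C : Type} {fut : C -> bool} {x : C} {p : program C}
    {v v' : valuation C} :
  prog_sem fut p v v' -> (forall Rs, In (Change Rs) p -> ~ In x Rs) -> v' x = v x.
Proof.
  revert v; induction p as [|[g|Rs] p IH]; intros v Hp Hnot; simpl in Hp.
  - apply Hp.
  - destruct Hp as [_ Hp].
    apply (IH v Hp); intros Rs HRs; apply Hnot; simpl; auto.
  - destruct Hp as [w [[_ Hw] Hp]].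
    rewrite (IH w Hp).
    + apply (proj2 (Hw x)), Hnot; simpl; auto.
    + intros Rs' HRs; apply Hnot; simpl; auto.
Qed.

Lemma psum_le {d : nat -> R} {m n : nat} :
  (forall k, 0 <= d k) -> (m <= n)%nat -> psum d m <= psum d n.
Proof.
  intros Hd Hmn; induction Hmn as [|n _ IH]; simpl; [lra|].
  specialize (Hd n); lra.
Qed.

Lemma future_clock_nonpos {C : Type} {fut : C -> bool} {v : valuation C} {x : C} {r : R} :
  is_valuation fut v -> fut x = true -> v x = Fin r -> r <= 0.
Proof.
  intros Hv Hx Hr; specialize (Hv x); rewrite Hx, Hr in Hv.
  destruct Hv as [Hv | [r' [Hr' Hle]]]; [discriminate|].
  injection Hr' as <-; exact Hle.
Qed.

Section Run.
Context {C Q Sig : Type} {A : GTA C Q Sig}.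
Context {q : nat -> Q} {v : nat -> valuation C} {d : nat -> R}
  {t : nat -> Q * Sig * program C * Q}.
Hypothesis Hrun : is_run A q v d t.

Lemma run_delay_nonneg (k : nat) : 0 <= d k.
Proof. destruct Hrun as [_ [_ [Hdel _]]]; apply (Hdel k). Qed.

Lemma run_unreleased_value (x : C) (i k : nat) (r : R) :
  v i x = Fin r -> (i <= k)%nat ->
  (forall j, (i <= j < k)%nat -> ~ released (t j) x) ->
  v k x = Fin (r + (psum d k - psum d i)).
Proof.
  intros Hr Hik Hnot; induction Hik as [|k Hik IH].
  - rewrite Hr; f_equal; lra.
  - destruct Hrun as [_ [_ [_ Htr]]].
    destruct (Htr k) as [_ [_ [_ Hstep]]].
    rewrite (prog_sem_unreleased Hstep).
    + unfold shift; rewrite IH by (intros j Hj; apply Hnot; lia).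
      simpl; f_equal; lra.
    + intros Rs HRs Hx; apply (Hnot k); [lia|]; exists Rs; auto.
Qed.

End Run.

Theorem lemma6 (C Q Sig : Type) (A : GTA C Q Sig)
  (HC : Finite C) (HQ : Finite Q) (HS : Finite Sig)
  (Hsafe : safe A)
  (q : nat -> Q) (v : nat -> valuation C) (d : nat -> R)
  (t : nat -> Q * Sig * program C * Q)
  (Hrun : is_run A q v d t) (Hnz : non_zeno d) :
  forall (x : C) (i : nat), fut A x = true -> v i x <> NInf ->
    exists j, (i <= j)%nat /\ released (t j) x.
Proof.
  intros x i Hx Hvi.
  apply NNPP; intro Hnever.
  assert (Hval : forall k, is_valuation (fut A) (v k)) by apply Hrun.
  assert (Hvix := Hval i x); rewrite Hx in Hvix.
  destruct Hvix as [Hinf | [r [Hr _]]]; [contradiction|].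
  destruct (Hnz (psum d i - r)) as [n Hn].
  assert (Hvk : v (max i n) x = Fin (r + (psum d (max i n) - psum d i))).
  { apply (run_unreleased_value Hrun); [exact Hr | lia |].
    intros j Hj Hrel; apply Hnever; exists j; split; [lia | exact Hrel]. }
  pose proof (future_clock_nonpos (Hval (max i n)) Hx Hvk).
  pose proof (psum_le (run_delay_nonneg Hrun) (Nat.le_max_r i n)).
  lra.
Qed.
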